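(* Let $\mathbb{X}$ be a Cartesian left additive category and $f_\bullet:A\to B$ a $\mathsf{D}$-sequence. Then (i) $\mathsf{D}[f_\bullet]$ is a $\mathsf{D}$-sequence; (ii) $\mathsf{T}(f_\bullet)$ is a $\mathsf{D}$-sequence; and (iii) $\langle1,0\rangle\cdot\mathsf{T}(f_\bullet)=f_\bullet\cdot\langle1,0\rangle$; (iv) $(1\times\pi_i)\cdot\mathsf{T}(f_\bullet)=\mathsf{T}_2(f_\bullet)\cdot(1\times\pi_i)$ for $i\in\{0,1\}$, where $\mathsf{T}_2(f_\bullet):=\langle\pi_0\cdot f_\bullet,\langle(1\times\pi_0)\cdot\mathsf{D}[f_\bullet],(1\times\pi_1)\cdot\mathsf{D}[f_\bullet]\rangle\rangle:A\times(A\times A)\to B\times(B\times B)$; (v) $(1\times(\pi_0+\pi_1))\cdot\mathsf{T}(f_\bullet)=\mathsf{T}_2(f_\bullet)\cdot(1\times(\pi_0+\pi_1))$; (vi) $\ell\cdot\mathsf{T}^2(f_\bullet)=\mathsf{T}(f_\bullet)\cdot\ell$; (vii) $c\cdot\mathsf{T}^2(f_\bullet)=\mathsf{T}^2(f_\bullet)\cdot c$.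
   Context: Composition in diagrammatic order. A Cartesian left additive category: finite products, hom-sets commutative monoids with $f(g+h)=fg+fh$, $f0=0$, projections additive. For an object $X$: $\langle1,0\rangle:X\to X\times X$; $1\times\pi_i,\ 1\times(\pi_0+\pi_1):X\times(X\times X)\to X\times X$; $\ell=\langle1,0\rangle\times\langle0,1\rangle:X\times X\to(X\times X)\times(X\times X)$; $c=\langle\langle\pi_0\pi_0,\pi_1\pi_0\rangle,\langle\pi_0\pi_1,\pi_1\pi_1\rangle\rangle:(X\times X)\times(X\times X)\to(X\times X)\times(X\times X)$ (swap of middle components). $\mathsf{P}(X)=X\times X$, $\mathsf{P}(f)=f\times f$. A pre-$\mathsf{D}$-sequence $f_\bullet:A\to B$ is $(f_n)_{n\ge0}$ with $f_n:\mathsf{P}^n(A)\to B$; $(h\cdot f_\bullet)_n=\mathsf{P}^n(h)f_n$ for $h:A'\to A$; $(f_\bullet\cdot k)_n=f_nk$ for $k:B\to C$; pairing $\langle f_\bullet,g_\bullet\rangle_n=\langle f_n,g_n\rangle$; sums and $0_\bullet$ pointwise. $\mathsf{T}(f_\bullet):\mathsf{P}(A)\to\mathsf{P}(B)$, $\mathsf{T}(f_\bullet)_n=\langle\mathsf{P}^n(\pi_0)f_n,f_{n+1}\rangle$; $\mathsf{D}[f_\bullet]:\mathsf{P}(A)\to B$, $\mathsf{D}[f_\bullet]_n=f_{n+1}$. A $\mathsf{D}$-sequence is a pre-$\mathsf{D}$-sequence such that for all $n$ (maps taken for the object $\mathsf{P}^n(A)$): $\langle1,0\rangle\cdot\mathsf{D}^{n+1}[f_\bullet]=0_\bullet$;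 $(1\times(\pi_0+\pi_1))\cdot\mathsf{D}^{n+1}[f_\bullet]=(1\times\pi_0)\cdot\mathsf{D}^{n+1}[f_\bullet]+(1\times\pi_1)\cdot\mathsf{D}^{n+1}[f_\bullet]$; $\ell\cdot\mathsf{D}^{n+2}[f_\bullet]=\mathsf{D}^{n+1}[f_\bullet]$; $c\cdot\mathsf{D}^{n+2}[f_\bullet]=\mathsf{D}^{n+2}[f_\bullet]$. In $\mathsf{T}_2$, $\pi_0:A\times(A\times A)\to A$. *)

(* Plain Rocq (no library needed).  Composition is written in DIAGRAMMATIC
   order:  f ;; g  means "first f, then g". *)

Set Implicit Arguments.
Unset Strict Implicit.

Record CLACat := {
  ob :> Type;
  hom : ob -> ob -> Type;
  idm : forall A, hom A A;
  comp : forall A B C, hom A B -> hom B C -> hom A C;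
  comp_idl : forall A B (f : hom A B), comp (idm A) f = f;
  comp_idr : forall A B (f : hom A B), comp f (idm B) = f;
  comp_assoc : forall A B C D (f : hom A B) (g : hom B C) (h : hom C D),
      comp (comp f g) h = comp f (comp g h);
  term : ob;
  bang : forall A, hom A term;
  bang_uniq : forall A (f : hom A term), f = bang A;
  prod : ob -> ob -> ob;
  p0 : forall A B, hom (prod A B) A;
  p1 : forall A B, hom (prod A B) B;
  pair : forall C A B, hom C A -> hom C B -> hom C (prod A B);
  pair_p0 : forall C A B (f : hom C A) (g : hom C B), comp (pair f g) (p0 A B) = f;
  pair_p1 : forall C A B (f : hom C A) (g : hom C B), comp (pair f g) (p1 A B) = g;
  pair_uniq : forall C A B (h : hom C (prod A B)),
      h = pair (comp h (p0 A B)) (comp h (p1 A B));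
  zero : forall A B, hom A B;
  add : forall A B, hom A B -> hom A B -> hom A B;
  add_assoc : forall A B (f g h : hom A B), add (add f g) h = add f (add g h);
  add_comm : forall A B (f g : hom A B), add f g = add g f;
  add_0l : forall A B (f : hom A B), add (zero A B) f = f;
  comp_addr : forall A B C (f : hom A B) (g h : hom B C),
      comp f (add g h) = add (comp f g) (comp f h);
  comp_0r : forall A B C (f : hom A B), comp f (zero B C) = zero A C;
  p0_add : forall C A B (g h : hom C (prod A B)),
      comp (add g h) (p0 A B) = add (comp g (p0 A B)) (comp h (p0 A B));
  p0_zero : forall C A B, comp (zero C (prod A B)) (p0 A B) = zero C A;
  p1_add : forall C A B (g h : hom C (prod A B)),
      comp (add g h) (p1 A B) = add (comp g (p1 A B)) (comp h (p1 A B));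
  p1_zero : forall C A B, comp (zero C (prod A B)) (p1 A B) = zero C B
}.

Arguments hom {c} _ _.
Arguments idm {c} A.
Arguments comp {c A B C} _ _.
Arguments prod {c} _ _.
Arguments p0 {c} A B.
Arguments p1 {c} A B.
Arguments pair {c C A B} _ _.
Arguments zero {c} A B.
Arguments add {c A B} _ _.
Arguments term {c}.
Arguments bang {c} A.

Infix ";;" := comp (at level 40, left associativity).

Section Ops.
Variable X : CLACat.

Definition pmap (A B A' B' : X) (f : hom A A') (g : hom B B')
  : hom (prod A B) (prod A' B') :=
  pair (p0 A B ;; f) (p1 A B ;; g).

Definition P (A : X) : X := prod A A.
Definition Pm (A B : X) (f : hom A B) : hom (P A) (P B) := pmap f f.

(* P^n, unfolded so that P^(n+1)(A) = P^n(P(A)) definitionally *)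
Fixpoint Pn (n : nat) (A : X) : X :=
  match n with O => A | S k => Pn k (P A) end.
Fixpoint Pnm (n : nat) (A B : X) (f : hom A B) : hom (Pn n A) (Pn n B) :=
  match n return hom (Pn n A) (Pn n B) with
  | O => f
  | S k => Pnm k (Pm f)
  end.

(* P^n with the outer unfolding P^(n+1)(A) = P(P^n(A)) *)
Fixpoint Pout (n : nat) (A : X) : X :=
  match n with O => A | S k => P (Pout k A) end.

Definition e10 (A : X) : hom A (P A) := pair (idm A) (zero A A).
Definition e01 (A : X) : hom A (P A) := pair (zero A A) (idm A).
Definition idxpi0 (A : X) : hom (prod A (P A)) (P A) := pmap (idm A) (p0 A A).
Definition idxpi1 (A : X) : hom (prod A (P A)) (P A) := pmap (idm A) (p1 A A).
Definition idxsum (A : X) : hom (prod A (P A)) (P A) :=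
  pmap (idm A) (add (p0 A A) (p1 A A)).
Definition ell (A : X) : hom (P A) (P (P A)) := pmap (e10 A) (e01 A).
Definition cswap (A : X) : hom (P (P A)) (P (P A)) :=
  pair (pair (p0 _ _ ;; p0 A A) (p1 _ _ ;; p0 A A))
       (pair (p0 _ _ ;; p1 A A) (p1 _ _ ;; p1 A A)).

Definition preDseq (A B : X) := forall n : nat, hom (Pn n A) B.

Definition seq_eq (A B : X) (f g : preDseq A B) : Prop := forall n, f n = g n.

Definition seq_precomp (A' A B : X) (h : hom A' A) (f : preDseq A B) : preDseq A' B :=
  fun n => Pnm n h ;; f n.
Definition seq_postcomp (A B C : X) (f : preDseq A B) (k : hom B C) : preDseq A C :=
  fun n => f n ;; k.
Definition seq_pair (A B C : X) (f : preDseq A B) (g : preDseq A C)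
  : preDseq A (prod B C) := fun n => pair (f n) (g n).
Definition seq_add (A B : X) (f g : preDseq A B) : preDseq A B :=
  fun n => add (f n) (g n).
Definition seq_zero (A B : X) : preDseq A B := fun n => zero (Pn n A) B.

Definition Tseq (A B : X) (f : preDseq A B) : preDseq (P A) (P B) :=
  fun n => pair (Pnm n (p0 A A) ;; f n) (f (S n)).
Definition Dseq (A B : X) (f : preDseq A B) : preDseq (P A) B :=
  fun n => f (S n).

Fixpoint Diter (k : nat) (A B : X) (f : preDseq A B) : preDseq (Pout k A) B :=
  match k return preDseq (Pout k A) B with
  | O => f
  | S j => Dseq (Diter j f)
  end.

Definition is_Dseq (A B : X) (f : preDseq A B) : Prop :=
  forall n : nat,
    let Y := Pout n A in
    seq_eq (seq_precomp (e10 Y) (Diter (S n) f)) (seq_zero Y B) /\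
    seq_eq (seq_precomp (idxsum Y) (Diter (S n) f))
           (seq_add (seq_precomp (idxpi0 Y) (Diter (S n) f))
                    (seq_precomp (idxpi1 Y) (Diter (S n) f))) /\
    seq_eq (seq_precomp (ell Y) (Diter (S (S n)) f)) (Diter (S n) f) /\
    seq_eq (seq_precomp (cswap Y) (Diter (S (S n)) f)) (Diter (S (S n)) f).

Definition T2seq (A B : X) (f : preDseq A B) : preDseq (prod A (P A)) (prod B (P B)) :=
  seq_pair (seq_precomp (p0 A (P A)) f)
           (seq_pair (seq_precomp (idxpi0 A) (Dseq f))
                     (seq_precomp (idxpi1 A) (Dseq f))).

End Ops.


(* The four D-sequence axioms for f constrain the whole family D^n[f], but each
   of them, for a fixed n, is a statement about the single sequence D^n[f]
   involving only its first two derivatives.  Since D^n[D[f]] is D^(n+1)[f],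
   (i) is immediate.  For (ii), D^n[T(f)] pairs P^n(pi0) . D^n[f] with
   D^n[D[f]], and the maps <1,0>, 1 x pi_i, 1 x (pi0 + pi1), l and c are
   natural with respect to additive maps such as P^n(pi0); hence the axioms
   pass to pairs of this shape.  Parts (iii)-(vii) are then componentwise
   computations with projections that reduce to the axioms for n = 0. *)

Set Implicit Arguments.
Unset Strict Implicit.

Arguments Pm : simpl never.
Arguments pmap : simpl never.

Section CartesianLeftAdditive.
Context {X : CLACat}.

Lemma comp_pair (C D A B : X) (h : hom C D) (f : hom D A) (g : hom D B) :
  h ;; pair f g = pair (h ;; f) (h ;; g).
Proof.
  rewrite (pair_uniq (h ;; pair f g)), !comp_assoc, pair_p0, pair_p1.
  reflexivity.
Qed.

Lemma pair_p0_comp (C A B D : X) (f : hom C A) (g : hom C B) (k : hom A D) :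
  pair f g ;; (p0 A B ;; k) = f ;; k.
Proof. rewrite <- comp_assoc, pair_p0. reflexivity. Qed.

Lemma pair_p1_comp (C A B D : X) (f : hom C A) (g : hom C B) (k : hom B D) :
  pair f g ;; (p1 A B ;; k) = g ;; k.
Proof. rewrite <- comp_assoc, pair_p1. reflexivity. Qed.

Lemma pair_eta (A B : X) : pair (p0 A B) (p1 A B) = idm (prod A B).
Proof. rewrite (pair_uniq (idm (prod A B))), !comp_idl. reflexivity. Qed.

Lemma zero_pair (C A B : X) : zero C (prod A B) = pair (zero C A) (zero C B).
Proof. rewrite (pair_uniq (zero C (prod A B))), p0_zero, p1_zero. reflexivity. Qed.

Lemma add_pair (C A B : X) (a c : hom C A) (b d : hom C B) :
  add (pair a b) (pair c d) = pair (add a c) (add b d).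
Proof.
  rewrite (pair_uniq (add (pair a b) (pair c d))), p0_add, p1_add,
    !pair_p0, !pair_p1.
  reflexivity.
Qed.

Ltac pair_simpl :=
  repeat rewrite ?comp_assoc, ?pair_p0, ?pair_p1, ?pair_p0_comp, ?pair_p1_comp,
    ?comp_pair, ?comp_idl, ?comp_idr, ?comp_0r, ?comp_addr.

Lemma pmap_p0 (A B A' B' : X) (a : hom A A') (b : hom B B') :
  pmap a b ;; p0 A' B' = p0 A B ;; a.
Proof. unfold pmap; apply pair_p0. Qed.

Lemma pair_pmap (C A B A' B' : X) (u : hom C A) (v : hom C B) (a : hom A A')
    (b : hom B B') :
  pair u v ;; pmap a b = pair (u ;; a) (v ;; b).
Proof. unfold pmap; pair_simpl; reflexivity. Qed.

Lemma Pm_comp (A B C : X) (a : hom A B) (b : hom B C) : Pm (a ;; b) = Pm a ;; Pm b.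
Proof. unfold Pm, pmap, P. pair_simpl. reflexivity. Qed.

Lemma Pm_id (A : X) : Pm (idm A) = idm (P A).
Proof. unfold Pm, pmap, P. rewrite !comp_idr. apply pair_eta. Qed.

Lemma Pnm_comp (n : nat) (A B C : X) (a : hom A B) (b : hom B C) :
  Pnm n (a ;; b) = Pnm n a ;; Pnm n b.
Proof.
  revert A B C a b; induction n as [|n IH]; intros; simpl.
  - reflexivity.
  - rewrite Pm_comp. apply IH.
Qed.

Lemma Pnm_id (n : nat) (A : X) : Pnm n (idm A) = idm (Pn n A).
Proof.
  revert A; induction n as [|n IH]; intros; simpl.
  - reflexivity.
  - rewrite Pm_id. apply IH.
Qed.

Lemma Pnm_compA (n : nat) (A B C D : X) (a : hom A B) (b : hom B C)
    (g : hom (Pn n C) D) :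
  Pnm n a ;; (Pnm n b ;; g) = Pnm n (a ;; b) ;; g.
Proof. rewrite Pnm_comp, comp_assoc. reflexivity. Qed.

Definition additive (Y Z : X) (h : hom Y Z) : Prop :=
  (forall C (u v : hom C Y), add u v ;; h = add (u ;; h) (v ;; h)) /\
  (forall C, zero C Y ;; h = zero C Z).

Lemma p0_additive (A B : X) : additive (p0 A B).
Proof. split; intros; [apply p0_add | apply p0_zero]. Qed.

Lemma Pm_additive (Y Z : X) (h : hom Y Z) : additive h -> additive (Pm h).
Proof.
  intros [h_add h_zero]; unfold Pm, pmap, P; split; intros.
  - rewrite !comp_pair, <- !comp_assoc, p0_add, p1_add, !h_add, !comp_assoc,
      add_pair.
    reflexivity.
  - rewrite comp_pair, <- !comp_assoc, p0_zero, p1_zero, !h_zero, zero_pair.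
    reflexivity.
Qed.

Fixpoint Poutm (n : nat) (Y Z : X) (h : hom Y Z) : hom (Pout n Y) (Pout n Z) :=
  match n return hom (Pout n Y) (Pout n Z) with
  | O => h
  | S k => Pm (Poutm k h)
  end.

Lemma Poutm_additive (n : nat) (Y Z : X) (h : hom Y Z) :
  additive h -> additive (Poutm n h).
Proof.
  intros h_additive; induction n as [|n IH]; simpl.
  - exact h_additive.
  - apply Pm_additive, IH.
Qed.

Lemma e10_natural (Y Z : X) (h : hom Y Z) :
  zero Y Y ;; h = zero Y Z -> e10 Y ;; Pm h = h ;; e10 Z.
Proof.
  intros h_zero; unfold e10, Pm, pmap, P; pair_simpl.
  rewrite h_zero; reflexivity.
Qed.

Lemma ell_natural (Y Z : X) (h : hom Y Z) :
  (forall C, zero C Y ;; h = zero C Z) -> ell Y ;; Pm (Pm h) = Pm h ;; ell Z.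
Proof.
  intros h_zero; unfold ell, e10, e01, Pm, pmap, P; pair_simpl.
  rewrite !h_zero; reflexivity.
Qed.

Lemma cswap_natural (Y Z : X) (h : hom Y Z) :
  cswap Y ;; Pm (Pm h) = Pm (Pm h) ;; cswap Z.
Proof. unfold cswap, Pm, pmap, P; pair_simpl; reflexivity. Qed.

Lemma idxpi0_natural (Y Z : X) (h : hom Y Z) :
  idxpi0 Y ;; Pm h = pmap h (Pm h) ;; idxpi0 Z.
Proof. unfold idxpi0, Pm, pmap, P; pair_simpl; reflexivity. Qed.

Lemma idxpi1_natural (Y Z : X) (h : hom Y Z) :
  idxpi1 Y ;; Pm h = pmap h (Pm h) ;; idxpi1 Z.
Proof. unfold idxpi1, Pm, pmap, P; pair_simpl; reflexivity. Qed.

Lemma idxsum_natural (Y Z : X) (h : hom Y Z) :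
  additive h -> idxsum Y ;; Pm h = pmap h (Pm h) ;; idxsum Z.
Proof.
  intros [h_add _]; unfold idxsum, Pm, pmap, P; pair_simpl.
  rewrite h_add; pair_simpl; reflexivity.
Qed.

Definition Daxioms (Y B : X) (g : preDseq Y B) : Prop :=
  seq_eq (seq_precomp (e10 Y) (Dseq g)) (seq_zero Y B) /\
  seq_eq (seq_precomp (idxsum Y) (Dseq g))
         (seq_add (seq_precomp (idxpi0 Y) (Dseq g))
                  (seq_precomp (idxpi1 Y) (Dseq g))) /\
  seq_eq (seq_precomp (ell Y) (Dseq (Dseq g))) (Dseq g) /\
  seq_eq (seq_precomp (cswap Y) (Dseq (Dseq g))) (Dseq (Dseq g)).

Lemma is_DseqP (A B : X) (f : preDseq A B) :
  is_Dseq f <-> forall n, Daxioms (Diter n f).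
Proof. split; intros H n; exact (H n). Qed.

Lemma Daxioms_ext (Y B : X) (g g' : preDseq Y B) :
  seq_eq g g' -> Daxioms g -> Daxioms g'.
Proof.
  unfold Daxioms, seq_eq, seq_precomp, seq_zero, seq_add, Dseq.
  intros E [g_e10 [g_sum [g_ell g_cswap]]]; repeat split; intros n;
    rewrite <- ?E; auto.
Qed.

Lemma Daxioms_pair_precomp (Y Z B : X) (h : hom Y Z) (g : preDseq Z B)
    (u : preDseq Y B) :
  additive h -> Daxioms g -> Daxioms u -> Daxioms (seq_pair (seq_precomp h g) u).
Proof.
  intros h_additive; pose proof h_additive as [_ h_zero].
  unfold Daxioms, seq_eq, seq_pair, seq_precomp, seq_zero, seq_add, Dseq; simpl.
  intros [g_e10 [g_sum [g_ell g_cswap]]] [u_e10 [u_sum [u_ell u_cswap]]];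
    repeat split; intros n; rewrite ?comp_pair.
  - rewrite u_e10, zero_pair, Pnm_compA, e10_natural, Pnm_comp,
      comp_assoc, g_e10, comp_0r by apply h_zero.
    reflexivity.
  - rewrite add_pair, u_sum, !Pnm_compA, idxsum_natural,
      idxpi0_natural, idxpi1_natural, !Pnm_comp, !comp_assoc, g_sum, comp_addr
      by exact h_additive.
    reflexivity.
  - rewrite u_ell, Pnm_compA, ell_natural, Pnm_comp, comp_assoc,
      g_ell by exact h_zero.
    reflexivity.
  - rewrite u_cswap, Pnm_compA, cswap_natural, Pnm_comp,
      comp_assoc, g_cswap.
    reflexivity.
Qed.

Lemma Diter_Tseq (A B : X) (f : preDseq A B) (n : nat) :
  seq_eq (Diter n (Tseq f))
         (seq_pair (seq_precomp (Poutm n (p0 A A)) (Diter n f)) (Diter n (Dseq f))).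
Proof.
  induction n as [|n IH]; intros m.
  - reflexivity.
  - exact (IH (S m)).
Qed.

(* Pout n (P A) and P (Pout n A) are equal but not convertible, so the two
   sequences are compared as dependent pairs. *)
Lemma Diter_Dseq (A B : X) (f : preDseq A B) (n : nat) :
  existT (fun Y : X => preDseq Y B) (Pout n (P A)) (Diter n (Dseq f)) =
  existT (fun Y : X => preDseq Y B) (P (Pout n A)) (Dseq (Diter n f)).
Proof.
  induction n as [|n IH].
  - reflexivity.
  - exact (f_equal (fun s : {Y : X & preDseq Y B} =>
             existT (fun Y : X => preDseq Y B) (P (projT1 s)) (Dseq (projT2 s)))
           IH).
Qed.

Lemma Dseq_is_Dseq (A B : X) (f : preDseq A B) : is_Dseq f -> is_Dseq (Dseq f).
Proof.
  intros f_Dseq; apply is_DseqP in f_Dseq; apply is_DseqP; intros n.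
  change ((fun s : {Y : X & preDseq Y B} => Daxioms (projT2 s))
            (existT (fun Y : X => preDseq Y B) (Pout n (P A)) (Diter n (Dseq f)))).
  rewrite Diter_Dseq.
  exact (f_Dseq (S n)).
Qed.

Lemma Tseq_is_Dseq (A B : X) (f : preDseq A B) : is_Dseq f -> is_Dseq (Tseq f).
Proof.
  intros f_Dseq; pose proof (Dseq_is_Dseq f_Dseq) as Df_Dseq.
  apply is_DseqP in f_Dseq, Df_Dseq; apply is_DseqP; intros n.
  apply (Daxioms_ext (fun m => eq_sym (Diter_Tseq f n m))).
  apply Daxioms_pair_precomp.
  - apply Poutm_additive, p0_additive.
  - apply f_Dseq.
  - apply Df_Dseq.
Qed.

Lemma Tseq_pmap_idm (A B : X) (f : preDseq A B) (g : hom (P A) A)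
    (k : hom (P B) B) :
  seq_eq (seq_precomp (pmap (idm A) g) (Dseq f))
         (seq_postcomp (seq_pair (seq_precomp (idxpi0 A) (Dseq f))
                                 (seq_precomp (idxpi1 A) (Dseq f))) k) ->
  seq_eq (seq_precomp (pmap (idm A) g) (Tseq f))
         (seq_postcomp (T2seq f) (pmap (idm B) k)).
Proof.
  unfold seq_eq, T2seq, seq_pair, seq_precomp, seq_postcomp, Tseq, Dseq, P.
  intros f_g n.
  rewrite comp_pair, Pnm_compA, pmap_p0, comp_idr, f_g, pair_pmap, comp_idr.
  reflexivity.
Qed.

Lemma Tseq_idxpi0 (A B : X) (f : preDseq A B) :
  seq_eq (seq_precomp (idxpi0 A) (Tseq f)) (seq_postcomp (T2seq f) (idxpi0 B)).
Proof. apply Tseq_pmap_idm; intros n; symmetry; apply pair_p0. Qed.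

Lemma Tseq_idxpi1 (A B : X) (f : preDseq A B) :
  seq_eq (seq_precomp (idxpi1 A) (Tseq f)) (seq_postcomp (T2seq f) (idxpi1 B)).
Proof. apply Tseq_pmap_idm; intros n; symmetry; apply pair_p1. Qed.

Lemma Tseq_idxsum (A B : X) (f : preDseq A B) :
  seq_eq (seq_precomp (idxsum A) (Dseq f))
         (seq_add (seq_precomp (idxpi0 A) (Dseq f))
                  (seq_precomp (idxpi1 A) (Dseq f))) ->
  seq_eq (seq_precomp (idxsum A) (Tseq f)) (seq_postcomp (T2seq f) (idxsum B)).
Proof.
  intros f_sum; apply Tseq_pmap_idm; intros n.
  unfold seq_postcomp, seq_pair; rewrite comp_addr, pair_p0, pair_p1.
  apply f_sum.
Qed.

Lemma Tseq_e10 (A B : X) (f : preDseq A B) :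
  seq_eq (seq_precomp (e10 A) (Dseq f)) (seq_zero A B) ->
  seq_eq (seq_precomp (e10 A) (Tseq f)) (seq_postcomp f (e10 B)).
Proof.
  unfold seq_eq, seq_precomp, seq_postcomp, seq_zero, Tseq, Dseq.
  intros f_e10 n.
  assert (e10_p0 : e10 A ;; p0 A A = idm A) by apply pair_p0.
  (* [P A] and [prod A A] are convertible, but rewriting matches implicit
     arguments syntactically: unfold [P] in the goal and hypotheses alike. *)
  unfold P in *.
  rewrite comp_pair, Pnm_compA, e10_p0, Pnm_id, comp_idl, f_e10.
  unfold e10; pair_simpl; reflexivity.
Qed.

Lemma Tseq_ell (A B : X) (f : preDseq A B) :
  seq_eq (seq_precomp (e10 A) (Dseq f)) (seq_zero A B) ->
  seq_eq (seq_precomp (ell A) (Dseq (Dseq f))) (Dseq f) ->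
  seq_eq (seq_precomp (ell A) (Tseq (Tseq f))) (seq_postcomp (Tseq f) (ell B)).
Proof.
  unfold seq_eq, seq_precomp, seq_postcomp, seq_zero, Tseq, Dseq; simpl.
  intros f_e10 f_ell n.
  assert (ell_p0_p0 : ell A ;; p0 (P A) (P A) ;; p0 A A = p0 A A)
    by (unfold ell, e10, pmap, P; pair_simpl; reflexivity).
  assert (ell_p0 : ell A ;; p0 (P A) (P A) = p0 A A ;; e10 A)
    by (unfold ell, pmap, P; pair_simpl; reflexivity).
  assert (ell_Pm_p0 : ell A ;; Pm (p0 A A) = p0 A A ;; e10 A)
    by (unfold ell, e10, e01, Pm, pmap, P; pair_simpl; reflexivity).
  assert (e10_vanishes : forall k : hom (Pn n (P A)) (Pn n A),
             k ;; (Pnm n (e10 A) ;; f (S n)) = zero _ B)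
    by (intros; rewrite f_e10, comp_0r; reflexivity).
  unfold P in *.
  rewrite !comp_pair, !Pnm_compA, ell_p0_p0, ell_p0, ell_Pm_p0, !Pnm_comp,
    !comp_assoc, !e10_vanishes, f_ell.
  unfold ell, e10, e01, pmap, P; pair_simpl; reflexivity.
Qed.

Lemma Tseq_cswap (A B : X) (f : preDseq A B) :
  seq_eq (seq_precomp (cswap A) (Dseq (Dseq f))) (Dseq (Dseq f)) ->
  seq_eq (seq_precomp (cswap A) (Tseq (Tseq f)))
         (seq_postcomp (Tseq (Tseq f)) (cswap B)).
Proof.
  unfold seq_eq, seq_precomp, seq_postcomp, Tseq, Dseq; simpl.
  intros f_cswap n.
  assert (cswap_p0_p0 :
            cswap A ;; p0 (P A) (P A) ;; p0 A A = p0 (P A) (P A) ;; p0 A A)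
    by (unfold cswap, P; pair_simpl; reflexivity).
  assert (cswap_p0 : cswap A ;; p0 (P A) (P A) = Pm (p0 A A))
    by (unfold cswap, Pm, pmap, P; pair_simpl; reflexivity).
  assert (cswap_Pm_p0 : cswap A ;; Pm (p0 A A) = p0 (P A) (P A))
    by (unfold cswap, Pm, pmap, P; pair_simpl; symmetry; apply pair_uniq).
  unfold P in *.
  rewrite !comp_pair, !Pnm_compA, cswap_p0_p0, cswap_p0, cswap_Pm_p0, f_cswap.
  unfold cswap, P; pair_simpl; reflexivity.
Qed.

End CartesianLeftAdditive.

Theorem proposition4p4 (X : CLACat) (A B : X) (f : preDseq A B) :
  is_Dseq f ->
  is_Dseq (Dseq f) /\
  is_Dseq (Tseq f) /\
  seq_eq (seq_precomp (e10 A) (Tseq f)) (seq_postcomp f (e10 B)) /\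
  seq_eq (seq_precomp (idxpi0 A) (Tseq f)) (seq_postcomp (T2seq f) (idxpi0 B)) /\
  seq_eq (seq_precomp (idxpi1 A) (Tseq f)) (seq_postcomp (T2seq f) (idxpi1 B)) /\
  seq_eq (seq_precomp (idxsum A) (Tseq f)) (seq_postcomp (T2seq f) (idxsum B)) /\
  seq_eq (seq_precomp (ell A) (Tseq (Tseq f))) (seq_postcomp (Tseq f) (ell B)) /\
  seq_eq (seq_precomp (cswap A) (Tseq (Tseq f))) (seq_postcomp (Tseq (Tseq f)) (cswap B)).
Proof.
  intros f_Dseq.
  destruct (proj1 (is_DseqP f) f_Dseq 0) as [f_e10 [f_sum [f_ell f_cswap]]].
  split; [exact (Dseq_is_Dseq f_Dseq)|].
  split; [exact (Tseq_is_Dseq f_Dseq)|].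
  split; [exact (Tseq_e10 f_e10)|].
  split; [exact (Tseq_idxpi0 f)|].
  split; [exact (Tseq_idxpi1 f)|].
  split; [exact (Tseq_idxsum f_sum)|].
  split; [exact (Tseq_ell f_e10 f_ell)|].
  exact (Tseq_cswap f_cswap).
Qed.
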